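(* Let $\mathcal{E}:\mathbb{R}^N\to\mathbb{R}^F$ and $\mathcal{D}:\mathbb{R}^F\to\mathbb{R}^N$ be maps, let $0<\alpha<1$, $\lambda>0$, $\beta>0$, let $\rho$ be a real number with $0<\rho<2\beta$, and let ${\bm x}\in\mathbb{R}^N$. Assume $\mathcal{T}:\mathbb{R}^F\to\mathbb{R}^F$, $\mathcal{T}(\cdot)=\mathcal{E}(\mathcal{D}(\cdot))-\mathcal{E}({\bm x})$, is continuous. Let sequences $({\bm z}^k)$ and $({\bm y}^k)$ in $\mathbb{R}^F$ satisfy, for $k=0,1,\dots$ (with given starting points ${\bm z}^{-1},{\bm z}^0$), $$ {\bm y}^k={\bm z}^k+\alpha({\bm z}^k-{\bm z}^{k-1}),\qquad {\bm z}^{k+1}={\bm y}^k-2\lambda\beta\,\mathcal{T}{\bm y}^k. $$ Assume ${\bm z}^\star\in\mathbb{R}^F$ satisfies $\mathcal{T}{\bm z}^\star=0$ and $\langle \mathcal{T}{\bm y}^k,{\bm y}^k-{\bm z}^\star\rangle\ge\beta\|\mathcal{T}{\bm y}^k\|^2$ for $k=0,1,\dots$. Set $\nu=\lambda^{-1}-1$, $\delta^k=\nu(1-\alpha)\|{\bm z}^k-{\bm z}^{k-1}\|^2$ and $\Delta^k({\bm z}^\star)=\|{\bm z}^k-{\bm z}^\star\|^2-\|{\bm z}^{k-1}-{\bm z}^\star\|^2$. Then for $k=1,2,\dots$, $$\Delta^{k+1}({\bm z}^\star)+\delta^{k+1}+\nu\alpha\|{\bm z}^{k+1}-2{\bm z}^k+{\bm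 z}^{k-1}\|^2\ \le\ \alpha\,\Delta^k({\bm z}^\star)+\big[\alpha(1+\alpha)+\nu\alpha(1-\alpha)\big]\|{\bm z}^k-{\bm z}^{k-1}\|^2.$$
   Context: $\langle\cdot,\cdot\rangle$ and $\|\cdot\|$ denote the Euclidean inner product and norm on $\mathbb{R}^F$. The maps $\mathcal{E}$ and $\mathcal{D}$ are arbitrary maps between the indicated spaces. *)

From HB Require Import structures.
From mathcomp Require Import all_boot all_order all_algebra.
From mathcomp Require Import all_classical all_reals all_analysis.
Set Implicit Arguments. Unset Strict Implicit. Unset Printing Implicit Defensive.
Import Order.TTheory GRing.Theory Num.Theory.
Import numFieldNormedType.Exports.
Local Open Scope ring_scope.

Definition dotp (R : realType) (n : nat) (u v : 'rV[R]_n) : R :=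
  \sum_(i < n) u 0 i * v 0 i.

Definition enorm (R : realType) (n : nat) (v : 'rV[R]_n) : R :=
  Num.sqrt (dotp v v).

From HB Require Import structures.
From mathcomp Require Import all_boot all_order all_algebra.
From mathcomp Require Import all_classical all_reals all_analysis.
From mathcomp Require Import ring.
Set Implicit Arguments. Unset Strict Implicit. Unset Printing Implicit Defensive.
Import Order.TTheory GRing.Theory Num.Theory.
Import numFieldNormedType.Exports.
Local Open Scope ring_scope.

(* Write y := z^k + alpha (z^k - z^(k-1)).  The step z^(k+1) = y - 2 lambda beta T y
   together with <T y, y - z*> >= beta ||T y||^2 gives
   ||z^(k+1) - z*||^2 <= ||y - z*||^2 - nu ||y - z^(k+1)||^2.
   Expanding the two squared distances from the extrapolated point y in terms
   of z^(k+1), z^k, z^(k-1) and z* turns this into the claimed inequality, up to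
   rearrangement. *)

Section EuclideanRow.
Context {R : realType} {n : nat}.
Implicit Types (a : R) (u v w : 'rV[R]_n).

Lemma dotpC u v : dotp u v = dotp v u.
Proof. by apply: eq_bigr => i _; rewrite mulrC. Qed.

Lemma dotpDl u v w : dotp (u + v) w = dotp u w + dotp v w.
Proof. by rewrite /dotp -big_split; apply: eq_bigr => i _; rewrite !mxE mulrDl. Qed.

Lemma dotpNl u w : dotp (- u) w = - dotp u w.
Proof. by rewrite /dotp -sumrN; apply: eq_bigr => i _; rewrite !mxE mulNr. Qed.

Lemma dotpZl a u w : dotp (a *: u) w = a * dotp u w.
Proof. by rewrite /dotp mulr_sumr; apply: eq_bigr => i _; rewrite !mxE mulrA. Qed.

Lemma dotpDr u v w : dotp w (u + v) = dotp w u + dotp w v.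
Proof. by rewrite dotpC dotpDl !(dotpC w). Qed.

Lemma dotpNr u w : dotp w (- u) = - dotp w u.
Proof. by rewrite dotpC dotpNl dotpC. Qed.

Lemma dotpZr a u w : dotp w (a *: u) = a * dotp w u.
Proof. by rewrite dotpC dotpZl dotpC. Qed.

Lemma dotp_ge0 u : 0 <= dotp u u.
Proof. by apply: sumr_ge0 => i _; rewrite -expr2 sqr_ge0. Qed.

Lemma enorm_sqr u : enorm u ^+ 2 = dotp u u.
Proof. by rewrite /enorm sqr_sqrtr // dotp_ge0. Qed.

Ltac expand_enorm_sqr :=
  rewrite !enorm_sqr !(dotpDl, dotpNl, dotpZl, dotpDr, dotpNr, dotpZr).

Lemma enorm_sqr_subZ a u v :
  enorm (u - a *: v) ^+ 2 = enorm u ^+ 2 - 2 * a * dotp v u + a ^+ 2 * enorm v ^+ 2.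
Proof. by expand_enorm_sqr; rewrite (dotpC u v); ring. Qed.

Lemma enorm_sqrZ a u : enorm (a *: u) ^+ 2 = a ^+ 2 * enorm u ^+ 2.
Proof. by expand_enorm_sqr; ring. Qed.

Lemma enorm_sqr_extrapolate a u v w :
  enorm (u + a *: (u - v) - w) ^+ 2 =
  (1 + a) * enorm (u - w) ^+ 2 - a * enorm (v - w) ^+ 2
  + a * (1 + a) * enorm (u - v) ^+ 2.
Proof. by expand_enorm_sqr; rewrite (dotpC v u) (dotpC w u) (dotpC w v); ring. Qed.

Lemma enorm_sqr_extrapolate_diff2 a u v w :
  enorm (u + a *: (u - v) - w) ^+ 2 =
  a * enorm (w - 2%:R *: u + v) ^+ 2 + (1 - a) * enorm (w - u) ^+ 2
  - a * (1 - a) * enorm (u - v) ^+ 2.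
Proof. by expand_enorm_sqr; rewrite (dotpC v u) (dotpC w u) (dotpC w v); ring. Qed.

Lemma enorm_sqr_forward_step (lambda beta : R) (y t s z' : 'rV[R]_n) :
  0 < lambda -> 0 <= beta -> beta * enorm t ^+ 2 <= dotp t (y - s) ->
  z' = y - (2 * lambda * beta) *: t ->
  enorm (z' - s) ^+ 2 <= enorm (y - s) ^+ 2 - (lambda^-1 - 1) * enorm (y - z') ^+ 2.
Proof.
move=> lambda_gt0 beta_ge0 coco ->; set g := 2 * lambda * beta.
have -> : y - (y - g *: t) = g *: t by rewrite opprB addrC subrK.
rewrite addrAC enorm_sqr_subZ enorm_sqrZ -subr_ge0.
have -> : enorm (y - s) ^+ 2 - (lambda^-1 - 1) * (g ^+ 2 * enorm t ^+ 2)
          - (enorm (y - s) ^+ 2 - 2 * g * dotp t (y - s) + g ^+ 2 * enorm t ^+ 2)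
          = 2 * g * (dotp t (y - s) - beta * enorm t ^+ 2).
  by rewrite /g; field; rewrite gt_eqF.
by rewrite !mulr_ge0 ?subr_ge0 // ltW.
Qed.

End EuclideanRow.

Theorem lemmaS1 (R : realType) (N F : nat)
  (E : 'rV[R]_N -> 'rV[R]_F) (D : 'rV[R]_F -> 'rV[R]_N)
  (alpha lambda beta rho : R) (x : 'rV[R]_N)
  (halpha : 0 < alpha < 1) (hlambda : 0 < lambda) (hbeta : 0 < beta)
  (hrho : 0 < rho < 2 * beta)
  (hT : continuous (fun v : 'rV[R]_F => E (D v) - E x))
  (zm1 : 'rV[R]_F) (z y : nat -> 'rV[R]_F)
  (hy0 : y 0%N = z 0%N + alpha *: (z 0%N - zm1))
  (hy : forall k : nat, y k.+1 = z k.+1 + alpha *: (z k.+1 - z k))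
  (hz : forall k : nat,
      z k.+1 = y k - (2 * lambda * beta) *: (E (D (y k)) - E x))
  (zstar : 'rV[R]_F)
  (hzstar : E (D zstar) - E x = 0)
  (hmono : forall k : nat,
      dotp (E (D (y k)) - E x) (y k - zstar)
        >= beta * enorm (E (D (y k)) - E x) ^+ 2) :
  let nu := lambda^-1 - 1 in
  forall k : nat, (1 <= k)%N ->
    (enorm (z k.+1 - zstar) ^+ 2 - enorm (z k - zstar) ^+ 2)
    + nu * (1 - alpha) * enorm (z k.+1 - z k) ^+ 2
    + nu * alpha * enorm (z k.+1 - 2%:R *: z k + z k.-1) ^+ 2
    <= alpha * (enorm (z k - zstar) ^+ 2 - enorm (z k.-1 - zstar) ^+ 2)
       + (alpha * (1 + alpha) + nu * alpha * (1 - alpha))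
         * enorm (z k - z k.-1) ^+ 2.
Proof.
move=> nu [//|k] _ /=.
have := enorm_sqr_forward_step hlambda (ltW hbeta) (hmono k.+1) (hz k.+1).
rewrite hy enorm_sqr_extrapolate enorm_sqr_extrapolate_diff2 -/nu -subr_ge0 => step.
rewrite -subr_ge0; apply: le_trans step _.
by rewrite le_eqVlt; apply/orP; left; apply/eqP; ring.
Qed.
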